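(* Let $\Omega$ be a finite-dimensional vector space over a finite field, $n=|\Omega|$, let $G\le\mathrm{AGL}(\Omega)$ be an affine group containing all translations of $\Omega$, and let $K$ be a one-point stabilizer of $G$, $k=|K|$. Suppose that $4(k-1)\,\mathrm{Fix}(K)<n$. Then $b(\mathrm{Inv}(G))\le 2$. In particular, this holds whenever $4k(k-1)f<n$ where $f=\mathrm{fix}(K)$.
   Context: For a permutation $g$, $\mathrm{fix}(g)$ is the number of its fixed points; for a set $K$ of permutations, $\mathrm{fix}(K)=\max\{\mathrm{fix}(g):g\in K\setminus\{1\}\}$ and $\mathrm{Fix}(K)=\sum_{g\in K\setminus\{1\}}\mathrm{fix}(g)$. $\mathrm{Inv}(G)=(\Omega,S)$ where $S$ is the set of orbits of $G$ on $\Omega\times\Omega$; this is a coherent configuration (its relations are unions of elements of $S$, its fibers are sets $\Gamma$ with $\{(\gamma,\gamma):\gamma\in\Gamma\}\in S$). A set $B\subseteq\Omega$ is a base of a coherent configuration $\mathcal X$ if the smallest coherent configuration on $\Omega$ whose relations include those of $\mathcal X$ and in which every $\{\beta\}$, $\beta\in B$, is a fiber has only singleton basic relations; $b(\mathcal X)$ is the minimal size of a base. *)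

From HB Require Import structures.
From mathcomp Require Import all_boot all_order all_algebra all_fingroup.
Set Implicit Arguments. Unset Strict Implicit. Unset Printing Implicit Defensive.
Import GRing.Theory.

(* A configuration is given by its set S of basic relations. *)
Section CC.
Variable T : finType.

Definition diagT : {set T * T} := [set p | p.1 == p.2].
Definition transp (r : {set T * T}) : {set T * T} := [set p | (p.2, p.1) \in r].

Definition inum (r s : {set T * T}) (a b : T) : nat :=
  #|[set c | ((a, c) \in r) && ((c, b) \in s)]|.

Definition is_cc (S : {set {set T * T}}) : Prop :=
  [/\ partition S [set: T * T],
      (forall r, r \in S -> (r \subset diagT) \/ [disjoint r & diagT]),
      (forall r, r \in S -> transp r \in S) &
      (forall r s t, r \in S -> s \in S -> t \in S ->
         forall p q, p \in t -> q \in t -> inum r s p.1 p.2 = inum r s q.1 q.2)].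

(* every relation (union of basic relations) of X is a relation of Y,
   i.e. every basic relation of X is a union of basic relations of Y *)
Definition cc_extends (Y X : {set {set T * T}}) : Prop :=
  forall s t, s \in X -> t \in Y -> (t \subset s) \/ [disjoint t & s].

Definition singleton_fiber (Y : {set {set T * T}}) (b : T) : Prop :=
  [set (b, b)] \in Y.

Definition cc_closure_with_points (X : {set {set T * T}}) (B : {set T})
    (Y : {set {set T * T}}) : Prop :=
  [/\ is_cc Y, cc_extends Y X, (forall b, b \in B -> singleton_fiber Y b) &
      (forall Z, is_cc Z -> cc_extends Z X ->
         (forall b, b \in B -> singleton_fiber Z b) -> cc_extends Z Y)].

Definition discrete_cc (Y : {set {set T * T}}) : Prop :=
  forall s, s \in Y -> #|s| = 1.

Definition is_base (X : {set {set T * T}}) (B : {set T}) : Prop :=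
  exists Y, cc_closure_with_points X B Y /\ discrete_cc Y.

Definition base_number_le (X : {set {set T * T}}) (m : nat) : Prop :=
  exists B : {set T}, #|B| <= m /\ is_base X B.

Definition orbit2 (G : {set {perm T}}) (p : T * T) : {set T * T} :=
  [set (g p.1, g p.2) | g : {perm T} in G].

Definition Inv (G : {set {perm T}}) : {set {set T * T}} :=
  [set orbit2 G p | p in [set: T * T]].

Definition fixn (g : {perm T}) : nat := #|[set x | g x == x]|.
Definition fixK (K : {set {perm T}}) : nat := \max_(g in K :\ 1%g) fixn g.
Definition FixK (K : {set {perm T}}) : nat := \sum_(g in K :\ 1%g) fixn g.

Definition point_stab (G : {set {perm T}}) (a : T) : {set {perm T}} :=
  [set g in G | g a == a].
End CC.

Local Open Scope ring_scope.
Definition is_affine (F : finFieldType) (m : nat) (g : {perm 'rV[F]_m}) : Prop :=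
  exists (A : 'M[F]_m) (b : 'rV[F]_m),
    A \in unitmx /\ forall x, g x = x *m A + b.

Definition in_AGL (F : finFieldType) (m : nat) (G : {set {perm 'rV[F]_m}}) : Prop :=
  forall g, g \in G -> is_affine g.

Definition contains_translations (F : finFieldType) (m : nat)
    (G : {set {perm 'rV[F]_m}}) : Prop :=
  forall b : 'rV[F]_m, exists2 g, g \in G & forall x, g x = x + b.

From mathcomp Require Import all_boot all_order all_algebra all_fingroup.
From mathcomp Require Import zify.
Set Implicit Arguments. Unset Strict Implicit. Unset Printing Implicit Defensive.
Import GRing.Theory.

(* If a coherent configuration Z extending Inv(G) has a non-singleton fiber
   through x, the intersection numbers force, for every singleton fiber {u}, a
   g in G fixing u and moving x to one fixed d <> x.  Conjugating g by the
   translation u -> alpha gives a nontrivial element of K = G_alpha, and since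
   elements of K are affine, each h in K# accounts for at most fix(h) such u:
   so Z has at most Fix(K) singleton fibers.  If {alpha} and {beta} are fibers,
   the same argument confines the non-singleton fibers to a set of "bad" points
   whose average size over beta is at most (k-1) Fix(K).  For a good beta the
   assumption k Fix(K) < n leaves no room for a non-singleton fiber, and then
   every basic relation of Z is a singleton, so {alpha, beta} is a base. *)

Lemma leq_card_bigcup (T I : finType) (J : {pred I}) (A : I -> {set T}) :
  #|\bigcup_(i in J) A i| <= \sum_(i in J) #|A i|.
Proof.
elim/big_rec2: _ => [|i B n _ IH]; first by rewrite cards0.
by rewrite (leq_trans (leq_card_setU _ _)) ?leq_add2l.
Qed.

Lemma sum_card_set_swap (T U : finType) (E : T -> U -> bool) :
  \sum_x #|[set y | E x y]| = \sum_y #|[set x | E x y]|.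
Proof.
have card_setE (V : finType) (P : pred V) : #|[set v | P v]| = \sum_v P v.
  by rewrite -sum1_card big_mkcond; apply: eq_bigr => v _; rewrite inE; case: (P v).
under eq_bigr do rewrite card_setE.
by rewrite exchange_big; apply: eq_bigr => y _; rewrite card_setE.
Qed.

Section DiscreteConfiguration.
Variable T : finType.

Definition discrete_config : {set {set T * T}} := [set [set p] | p : T * T].

Lemma is_cc_discrete_config : is_cc discrete_config.
Proof.
split.
- apply/and3P; split.
  + apply/eqP/setP => p; rewrite inE; apply/bigcupP.
    by exists [set p]; rewrite ?set11 // imset_f.
  + apply/trivIsetP => _ _ /imsetP[p _ ->] /imsetP[q _ ->] ne_pq.
    by rewrite disjoints1 inE; apply: contraNneq ne_pq => ->.
  + by apply/imsetP => -[p _] /setP /(_ p); rewrite !inE eqxx.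
- move=> _ /imsetP[p _ ->]; have [p_diag | pN_diag] := boolP (p \in diagT T).
  + by left; rewrite sub1set.
  + by right; rewrite disjoints1.
- move=> _ /imsetP[[a b] _ ->]; apply/imsetP; exists (b, a) => //.
  by apply/setP => -[c d]; rewrite !inE !xpair_eqE andbC.
- by move=> r s _ _ _ /imsetP[t _ ->] p q; rewrite !inE => /eqP-> /eqP->.
Qed.

Lemma discrete_cc_discrete_config : discrete_cc discrete_config.
Proof. by move=> _ /imsetP[p _ ->]; rewrite cards1. Qed.

Lemma discrete_config_extends X : cc_extends discrete_config X.
Proof.
move=> s _ _ /imsetP[p _ ->].
by have [ps | pNs] := boolP (p \in s); [left; rewrite sub1set | right; rewrite disjoints1].
Qed.

End DiscreteConfiguration.

Section CoherentConfiguration.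
Variables (T : finType) (Z : {set {set T * T}}).
Hypothesis ccZ : is_cc Z.

Definition fibers : {set T} := [set u | [set (u, u)] \in Z].

Lemma cc_pblock_mem p : pblock Z p \in Z.
Proof. by case: ccZ => /and3P[/eqP coverZ _ _] _ _ _; rewrite pblock_mem ?coverZ. Qed.

Lemma cc_mem_pblock p : p \in pblock Z p.
Proof. by case: ccZ => /and3P[/eqP coverZ _ _] _ _ _; rewrite mem_pblock coverZ. Qed.

Lemma cc_fiber_fst u t x c y :
  singleton_fiber Z u -> t \in Z -> (u, x) \in t -> (c, y) \in t -> c = u.
Proof.
case: ccZ => _ _ _ inumE Zu Zt uxt cyt.
have : 0 < inum [set (u, u)] t u x.
  by rewrite card_gt0; apply/set0Pn; exists u; rewrite inE set11 uxt.
rewrite (inumE _ _ _ Zu Zt Zt _ _ uxt cyt) card_gt0 => /set0Pn[z].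
by rewrite !inE => /andP[/eqP[-> _] _].
Qed.

Lemma cc_fiber_snd v t x c y :
  singleton_fiber Z v -> t \in Z -> (x, v) \in t -> (y, c) \in t -> c = v.
Proof.
case: ccZ => _ _ _ inumE Zv Zt xvt yct.
have : 0 < inum t [set (v, v)] x v.
  by rewrite card_gt0; apply/set0Pn; exists v; rewrite !inE xvt eqxx.
rewrite (inumE _ _ _ Zt Zv Zt _ _ xvt yct) card_gt0 => /set0Pn[z].
by rewrite !inE => /andP[_ /eqP[_ ->]].
Qed.

(* Compare the intersection numbers of (transp t, t) at (x,x) and at (y,y),
   where t is the basic relation of (u,x): u is a common witness for (x,x). *)
Lemma cc_fiber_pblock u x y :
  singleton_fiber Z u -> (y, y) \in pblock Z (x, x) ->
  (u, y) \in pblock Z (u, x).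
Proof.
move=> Zu yy_xx; set t := pblock Z (u, x).
have [_ _ transpZ inumE] := ccZ.
have : 0 < inum (transp t) t x x.
  by apply/card_gt0P; exists u; rewrite !inE /= cc_mem_pblock.
rewrite (inumE _ _ _ (transpZ _ (cc_pblock_mem _)) (cc_pblock_mem _)
          (cc_pblock_mem _) _ _ (cc_mem_pblock _) yy_xx).
case/card_gt0P => z; rewrite !inE /= => /andP[_ zyt].
by rewrite -(cc_fiber_fst Zu (cc_pblock_mem _) (cc_mem_pblock _) zyt).
Qed.

Lemma cc_nonfiber_diag x :
  ~ singleton_fiber Z x -> exists2 y, y != x & (y, y) \in pblock Z (x, x).
Proof.
move=> Zx; have [_ diagZ _ _] := ccZ.
have sub_diag : pblock Z (x, x) \subset diagT T.
  case: (diagZ _ (cc_pblock_mem (x, x))) => // /disjoint_setI0 /setP /(_ (x, x)).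
  by rewrite !inE cc_mem_pblock /= eqxx.
have [/existsP[y /andP[]] | no_y] :=
  boolP [exists y, (y != x) && ((y, y) \in pblock Z (x, x))]; first by exists y.
case: Zx; rewrite /singleton_fiber.
suff <- : pblock Z (x, x) = [set (x, x)] by apply: cc_pblock_mem.
apply/eqP; rewrite eqEsubset sub1set cc_mem_pblock andbT.
apply/subsetP => -[a b] ab_xx; move: (subsetP sub_diag _ ab_xx).
rewrite inE /= => /eqP eq_ab; subst b.
rewrite inE xpair_eqE andbb; apply/negPn/negP => ne_ax.
by move/existsPn: no_y => /(_ a); rewrite ne_ax ab_xx.
Qed.

Lemma cc_fibersT_extends_discrete :
  fibers = setT -> cc_extends Z (discrete_config T).
Proof.
move=> fibersT _ t /imsetP[p _ ->] Zt.
have Zfib a : singleton_fiber Z a by have := in_setT a; rewrite -fibersT inE.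
have [pt | pNt] := boolP (p \in t); last by right; rewrite disjoint_sym disjoints1.
left; apply/subsetP => -[c d] cdt; rewrite inE; case: p pt => a b abt.
by rewrite (cc_fiber_fst (Zfib a) Zt abt cdt) (cc_fiber_snd (Zfib b) Zt abt cdt).
Qed.

End CoherentConfiguration.

Lemma is_base_of_fibers (T : finType) (X : {set {set T * T}}) (B : {set T}) :
  (forall Z, is_cc Z -> cc_extends Z X ->
     (forall b, b \in B -> singleton_fiber Z b) -> fibers Z = setT) ->
  is_base X B.
Proof.
move=> fibersT; exists (discrete_config T).
split; last exact: discrete_cc_discrete_config.
split; [exact: is_cc_discrete_config | exact: discrete_config_extends | | ].
  by move=> b _; apply: imset_f.
move=> Z ccZ extX fibB.
exact: cc_fibersT_extends_discrete ccZ (fibersT Z ccZ extX fibB).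
Qed.

Section Invariants.
Variables (T : finType) (G : {group {perm T}}).

Lemma FixK_le_fixK (K : {set {perm T}}) : FixK K <= #|K :\ 1%g| * fixK K.
Proof. by rewrite /FixK -sum_nat_const; apply: leq_sum => g Kg; apply: leq_bigmax_cond. Qed.

Lemma Inv_nonfiber_witness Z x :
  is_cc Z -> cc_extends Z (Inv G) -> ~ singleton_fiber Z x ->
  exists2 d, d != x & forall u, singleton_fiber Z u ->
    exists2 g, g \in G & g u = u /\ g x = d.
Proof.
move=> ccZ extZ Zx; have [d ne_dx dd_xx] := cc_nonfiber_diag ccZ Zx.
exists d => // u Zu.
have orbitG : orbit2 G (u, x) \in Inv G by apply: imset_f.
have ux_orbit : (u, x) \in orbit2 G (u, x).
  by apply/imsetP; exists 1%g; rewrite ?perm1.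
case: (extZ _ _ orbitG (cc_pblock_mem ccZ (u, x))) => [/subsetP sub | disj].
  have /imsetP[g Gg [/esym gu /esym gx]] := sub _ (cc_fiber_pblock ccZ Zu dd_xx).
  by exists g.
by rewrite (disjointFr disj (cc_mem_pblock ccZ (u, x))) in ux_orbit.
Qed.

End Invariants.

Section AffineGroup.
Variables (F : finFieldType) (m : nat).
Local Notation V := 'rV[F]_m.
Local Open Scope ring_scope.

Lemma affine_sub (g : {perm V}) :
  is_affine g -> exists A : 'M[F]_m, forall y z, g y - g z = (y - z) *m A.
Proof.
case=> A [b [_ gE]]; exists A => y z.
by rewrite !gE mulmxBl opprD addrACA subrr addr0.
Qed.

(* For u0 in the set, u |-> u - u0 + alpha maps it injectively into the fixed
   points of h: the linear part of h fixes every difference u - u0. *)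
Lemma card_affine_shift_le_fixn (h : {perm V}) (alpha c d : V) :
  is_affine h -> h alpha = alpha ->
  (#|[set u | (h (c - u + alpha) == d - u + alpha)%R]| <= fixn h)%N.
Proof.
move=> aff_h h_alpha; have [A hA] := affine_sub aff_h.
set S := [set u | _]; have [-> | [u0 Su0]] := set_0Vmem S; first by rewrite cards0.
rewrite /fixn -(card_imset S (addIr (alpha - u0))).
apply: subset_leq_card; apply/subsetP => _ /imsetP[u Su ->].
rewrite !inE in Su Su0 *.
have shiftB (a : V) : (a - u + alpha) - (a - u0 + alpha) = u0 - u.
  by rewrite opprD addrACA subrr addr0 opprB addrC addrA subrK.
have fixA : (u - u0) *m A = u - u0.
  have := hA (c - u + alpha) (c - u0 + alpha).
  by rewrite (eqP Su) (eqP Su0) !shiftB -opprB mulNmx => /oppr_inj <-.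
have := hA (u + (alpha - u0)) alpha.
by rewrite h_alpha addrCA [alpha + _]addrC addrK fixA => /(canRL (subrK alpha)) ->.
Qed.

Lemma sum_card_affine_shift_le (h1 h2 : {perm V}) (alpha : V) :
  is_affine h2 -> h2 alpha = alpha ->
  (\sum_beta #|[set y | (h2 (y - beta + alpha) == h1 y - beta + alpha)%R]|
     <= #|[set: V]| * fixn h2)%N.
Proof.
move=> aff_h2 h2_alpha; rewrite sum_card_set_swap cardsT -sum_nat_const.
by apply: leq_sum => y _; apply: card_affine_shift_le_fixn.
Qed.

Variables (G : {group {perm V}}) (alpha : V).
Hypotheses (affG : in_AGL G) (transG : contains_translations G).
Let K := point_stab G alpha.

Lemma card_point_stab : #|K| = #|K :\ 1%g|.+1.
Proof. by rewrite (cardsD1 1%g) !inE group1 perm1 eqxx. Qed.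

Lemma point_stab_conj_translation u x d g :
  g \in G -> g u = u -> g x = d -> d != x ->
  exists2 h, h \in K :\ 1%g & h (x - u + alpha) = d - u + alpha.
Proof.
move=> Gg gu gx ne_dx.
have [t1 Gt1 t1E] := transG (u - alpha); have [t2 Gt2 t2E] := transG (alpha - u).
set h := (t1 * g * t2)%g.
have hE y : h y = g (y + (u - alpha)) + (alpha - u) by rewrite !permM t1E t2E.
have addBC (a b : V) : a + (b - a) = b by rewrite addrCA subrr addr0.
have hx : h (x - u + alpha) = d - u + alpha.
  by rewrite hE -addrA addBC subrK gx addrA addrAC.
exists h => //; rewrite !inE !groupM //= hE addBC gu addBC eqxx !andbT.
by apply: contraNneq ne_dx => h1; move: hx; rewrite h1 perm1 => /addIr/addIr ->.
Qed.

(* If {alpha} and {beta} are fibers of a configuration extending Inv(G) but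
   {y} is not, then y is bad: h1 comes from the witness at alpha, h2 from the
   conjugated witness at beta. *)
Definition bad_points (beta : V) : {set V} :=
  [set y | [exists h1 in K :\ 1%g, exists h2 in K :\ 1%g,
     (h2 (y - beta + alpha) == h1 y - beta + alpha) && (h1 y != y)]].

Lemma card_fibers_le_FixK Z x :
  is_cc Z -> cc_extends Z (Inv G) -> ~ singleton_fiber Z x ->
  (#|fibers Z| <= FixK K)%N.
Proof.
move=> ccZ extZ Zx; have [d ne_dx witness] := Inv_nonfiber_witness ccZ extZ Zx.
pose S h := [set u | h (x - u + alpha) == d - u + alpha].
have fibers_sub : fibers Z \subset \bigcup_(h in K :\ 1%g) S h.
  apply/subsetP => u; rewrite inE => /witness[g Gg [gu gx]].
  have [h Kh hx] := point_stab_conj_translation Gg gu gx ne_dx.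
  by apply/bigcupP; exists h; rewrite // inE hx.
apply: leq_trans (subset_leq_card fibers_sub) (leq_trans (leq_card_bigcup _ _) _).
apply: leq_sum => h; rewrite !inE => /andP[_ /andP[Gh /eqP h_alpha]].
exact: card_affine_shift_le_fixn (affG Gh) h_alpha.
Qed.

Lemma nonfiber_bad_point Z beta y :
  is_cc Z -> cc_extends Z (Inv G) ->
  singleton_fiber Z alpha -> singleton_fiber Z beta -> ~ singleton_fiber Z y ->
  y \in bad_points beta.
Proof.
move=> ccZ extZ Za Zb Zy; have [d ne_dy witness] := Inv_nonfiber_witness ccZ extZ Zy.
have [g1 Gg1 [g1a g1y]] := witness _ Za; have [g2 Gg2 [g2b g2y]] := witness _ Zb.
have [h2 Kh2 h2y] := point_stab_conj_translation Gg2 g2b g2y ne_dy.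
rewrite inE; apply/exists_inP; exists g1.
  rewrite !inE Gg1 g1a eqxx !andbT.
  by apply: contraNneq ne_dy => g1_1; rewrite -g1y g1_1 perm1.
by apply/exists_inP; exists h2; rewrite // h2y g1y eqxx ne_dy.
Qed.

Lemma fibersT_of_bad_points Z beta :
  is_cc Z -> cc_extends Z (Inv G) ->
  singleton_fiber Z alpha -> singleton_fiber Z beta ->
  (FixK K + #|bad_points beta| < #|[set: V]|)%N -> fibers Z = setT.
Proof.
move=> ccZ extZ Za Zb small; apply/setP => x; rewrite in_setT.
apply/negPn/negP; rewrite inE => /negP Zx.
have nonfibers_bad : ~: fibers Z \subset bad_points beta.
  apply/subsetP => y; rewrite in_setC inE => /negP.
  exact: nonfiber_bad_point ccZ extZ Za Zb.
have := leq_add (card_fibers_le_FixK ccZ extZ Zx) (subset_leq_card nonfibers_bad).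
by rewrite cardsC -cardsT leqNgt small.
Qed.

Lemma sum_card_bad_points :
  (\sum_beta #|bad_points beta| <= #|[set: V]| * (#|K :\ 1%g| * FixK K))%N.
Proof.
set J := K :\ 1%g.
pose E h1 h2 beta := [set y | h2 (y - beta + alpha) == h1 y - beta + alpha].
have bad_le beta : (#|bad_points beta| <= \sum_(h1 in J) \sum_(h2 in J) #|E h1 h2 beta|)%N.
  have bad_sub : bad_points beta \subset \bigcup_(h1 in J) \bigcup_(h2 in J) E h1 h2 beta.
    apply/subsetP => y; rewrite inE => /exists_inP[h1 Jh1 /exists_inP[h2 Jh2 /andP[Ey _]]].
    apply/bigcupP; exists h1 => //; apply/bigcupP; exists h2 => //.
    by rewrite /E inE.
  apply: leq_trans (subset_leq_card bad_sub) (leq_trans (leq_card_bigcup _ _) _).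
  by apply: leq_sum => h1 _; apply: leq_card_bigcup.
apply: (@leq_trans (\sum_beta \sum_(h1 in J) \sum_(h2 in J) #|E h1 h2 beta|)).
  by apply: leq_sum => beta _; apply: bad_le.
rewrite exchange_big /=; under eq_bigr do rewrite exchange_big /=.
apply: (@leq_trans (\sum_(h1 in J) \sum_(h2 in J) #|[set: V]| * fixn h2)).
  apply: leq_sum => h1 _; apply: leq_sum => h2; rewrite !inE => /andP[_ /andP[Gh2 /eqP h2a]].
  exact: sum_card_affine_shift_le (affG Gh2) h2a.
by rewrite sum_nat_const mulnCA -big_distrr.
Qed.

Lemma exists_small_bad_points :
  exists beta, (#|bad_points beta| <= #|K :\ 1%g| * FixK K)%N.
Proof.
apply/existsP; apply: contraT => /existsPn large; set c := (#|K :\ 1%g| * FixK K)%N.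
have n_gt0 : (0 < #|V|)%N by apply/card_gt0P; exists 0.
have : (#|V| * c.+1 <= \sum_beta #|bad_points beta|)%N.
  by rewrite -sum_nat_const; apply: leq_sum => beta _; rewrite ltnNge large.
move/leq_trans/(_ sum_card_bad_points); by rewrite cardsT -/c leqNgt ltn_pmul2l // ltnSn.
Qed.

Lemma Inv_base_le2 :
  (#|K| * FixK K < #|[set: V]|)%N -> base_number_le (Inv G) 2.
Proof.
move=> small; have [beta bad_beta] := exists_small_bad_points.
exists [set alpha; beta]; split; first by rewrite cards2; case: (alpha != beta).
apply: is_base_of_fibers => Z ccZ extZ fibB.
apply: (fibersT_of_bad_points ccZ extZ (fibB _ (set21 _ _)) (fibB _ (set22 _ _))).
by apply: leq_ltn_trans small; rewrite card_point_stab mulSn leq_add2l.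
Qed.

End AffineGroup.

Theorem corollary8p2 (F : finFieldType) (m : nat) (G : {group {perm 'rV[F]_m}})
  (alpha : 'rV[F]_m) :
  in_AGL G -> contains_translations G ->
  let K := point_stab G alpha in
  let n := #|[set: 'rV[F]_m]| in
  let k := #|K| in
  ((4 * (k - 1) * FixK K < n)%N -> base_number_le (Inv G) 2) /\
  ((4 * k * (k - 1) * fixK K < n)%N -> base_number_le (Inv G) 2).
Proof.
move=> affG transG K n k.
have k_succ : k = #|K :\ 1%g|.+1 by exact: card_point_stab.
have base : (k * FixK K < n)%N -> base_number_le (Inv G) 2 := Inv_base_le2 affG transG.
have Fix_le := FixK_le_fixK K.
rewrite k_succ subn1 /= in base *; move: base Fix_le.
move: #|K :\ 1%g| (FixK K) (fixK K) => j Fix f base Fix_le.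
by split=> small; apply: base; case: j Fix_le small => [|j]; nia.
Qed.
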